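(* Let $p$ be a prime and $d>1$ an integer. Let $T_d$ be the $d$-th Chebyshev polynomial of the first kind, viewed as a self-map of $\mathbb{A}^1(\mathbb{F}_p)=\mathbb{F}_p$. Then $$\max_{x\in\mathbb{F}_p}t(T_d,x)=\max_q\left(\max\left(\left\lceil\frac{v_q(p-1)}{v_q(d)}\right\rceil,\left\lceil\frac{v_q(p+1)}{v_q(d)}\right\rceil\right)\right),$$ where $q$ ranges over the prime divisors of $d$ and $v_q$ is the $q$-adic valuation.
   Context: The $d$-th Chebyshev polynomial of the first kind $T_d\in\mathbb{Z}[z]$ is the monic degree-$d$ polynomial with $T_d(z+z^{-1})=z^d+z^{-d}$, reduced modulo $p$. For a self-map $f$ of a finite set and a point $x$, the tail $t(f,x)$ is the least integer $m\ge0$ such that $f^m(x)$ is periodic. *)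

From HB Require Import structures.
From mathcomp Require Import all_boot all_order all_algebra.
Set Implicit Arguments. Unset Strict Implicit. Unset Printing Implicit Defensive.
Import GRing.Theory.
Local Open Scope ring_scope.

(* Chebyshev polynomials of the first kind over Z, normalized so that
   T_d(z + z^-1) = z^d + z^-d : T_0 = 2, T_1 = X, T_{n+2} = X T_{n+1} - T_n. *)
Fixpoint cheb_pair (n : nat) : {poly int} * {poly int} :=
  match n with
  | 0%N => (2%:P, 'X)
  | n'.+1 => let (a, b) := cheb_pair n' in (b, 'X * b - a)
  end.

Definition cheb (d : nat) : {poly int} := (cheb_pair d).1.

Definition cheb_map (p d : nat) (x : 'F_p) : 'F_p :=
  (map_poly (fun z : int => z%:~R : 'F_p) (cheb d)).[x].

Arguments cheb_map p d x : clear implicits.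
Local Close Scope ring_scope.

Definition periodic_pt (T : Type) (f : T -> T) (y : T) : Prop :=
  exists n, 0 < n /\ iter n f y = y.

Definition is_tail (T : Type) (f : T -> T) (x : T) (m : nat) : Prop :=
  periodic_pt f (iter m f x) /\ forall k, k < m -> ~ periodic_pt f (iter k f x).

Definition ceil_div (a b : nat) : nat := (a + b.-1) %/ b.

Definition tail_bound (p d : nat) : nat :=
  \max_(q <- primes d)
     maxn (ceil_div (logn q (p - 1)) (logn q d))
          (ceil_div (logn q (p + 1)) (logn q d)).

Example cheb2 : cheb 2 = ('X * 'X - 2%:P)%R. Proof. by []. Qed.

(* Write x = z + z^-1 with z in an extension field of F_p.  Since x is fixed by
   Frobenius, z^p + z^-p = z + z^-1, so z^p = z or z^p = z^-1: the multiplicative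
   order o of z divides p - 1 or p + 1.  As T_d(z + z^-1) = z^d + z^-d, the point
   T_d^k(x) is periodic iff z^(d^(k+n)) = z^(+-d^k) for some n > 0, i.e. iff the
   part of o supported on the primes of d divides d^k, i.e. iff
   k >= max_(q | d) ceil(v_q(o) / v_q(d)).  This bound grows with o, and the
   values o = p - 1 and o = p + 1 are realised by primitive roots of unity in F_(p^2). *)

From mathcomp Require Import all_boot all_order all_algebra all_fingroup all_solvable all_field.
From mathcomp Require Import ring zify.
Set Implicit Arguments. Unset Strict Implicit. Unset Printing Implicit Defensive.
Import GRing.Theory.

Section ChebyshevAddInv.
Local Open Scope ring_scope.

Lemma add_inv_eq (L : fieldType) (a b : L) : a != 0 -> b != 0 ->
  a + a^-1 = b + b^-1 <-> a = b \/ a * b = 1.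
Proof.
move=> a_nz b_nz; split=> [eq_ab | [-> // | ab1]].
  have : (a - b) * (a * b - 1) = 0.
    have -> : (a - b) * (a * b - 1) = a * b * ((a + a^-1) - (b + b^-1)).
      by field; rewrite a_nz b_nz.
    by rewrite eq_ab subrr mulr0.
  by move/eqP; rewrite mulf_eq0 !subr_eq0 => /orP[] /eqP; tauto.
have -> : a^-1 = b by apply: (mulfI a_nz); rewrite mulfV.
have -> : b^-1 = a by apply: (mulIf b_nz); rewrite mulVf.
exact: addrC.
Qed.

Lemma chebSS n : cheb n.+2 = 'X * cheb n.+1 - cheb n.
Proof. by rewrite /cheb /=; case: (cheb_pair n). Qed.

Definition chebR (R : nzRingType) n : {poly R} := map_poly intr (cheb n).

Lemma chebR_add_inv (L : fieldType) (z : L) n : z != 0 ->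
  (chebR L n).[z + z^-1] = z ^+ n + z ^- n.
Proof.
move=> z_nz.
suff /(_ n)[] : forall m : nat, (chebR L m).[z + z^-1] = z ^+ m + z ^- m /\
                      (chebR L m.+1).[z + z^-1] = z ^+ m.+1 + z ^- m.+1 by [].
elim=> [|m [IHm IHm1]].
  rewrite /chebR /= map_polyC map_polyX hornerC hornerX /= !expr0 expr1 invr1.
  by split.
split=> //; rewrite /chebR chebSS rmorphB rmorphM /= map_polyX.
rewrite hornerD hornerN mulrC hornerMX -/(chebR L m) -/(chebR L m.+1) IHm IHm1.
by rewrite !exprS !invfM; field; rewrite expf_neq0 z_nz.
Qed.

End ChebyshevAddInv.

Section ChebyshevIter.
Local Open Scope ring_scope.
Variables (p d : nat) (L : fieldType) (phi : {rmorphism 'F_p -> L}).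

Lemma rmorph_cheb_map y : phi (cheb_map p d y) = (chebR L d).[phi y].
Proof.
rewrite /cheb_map -horner_map /chebR -map_poly_comp.
by congr (_.[_]); apply: eq_map_poly => c /=; rewrite rmorph_int.
Qed.

Lemma rmorph_iter_cheb_map x z k : z != 0 -> phi x = z + z^-1 ->
  phi (iter k (cheb_map p d) x) = z ^+ (d ^ k) + z ^- (d ^ k).
Proof.
move=> z_nz phi_x; elim: k => [|k IHk] /=; first by rewrite expn0 expr1.
rewrite rmorph_cheb_map IHk chebR_add_inv ?expf_neq0 //.
by rewrite -!exprM -expnSr.
Qed.

End ChebyshevIter.

(* The tail of any point z + z^-1 with z of multiplicative order o. *)
Definition tail_of_order (d o : nat) : nat :=
  \max_(q <- primes d) ceil_div (logn q o) (logn q d).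

Lemma leq_ceil_div a b k : 0 < b -> (ceil_div a b <= k) = (a <= k * b).
Proof. by move=> b_gt0; rewrite /ceil_div -ltnS ltn_divLR // mulSn; apply/idP/idP; lia. Qed.

Lemma tail_of_order_leP d o k :
  reflect (forall q, q \in primes d -> logn q o <= k * logn q d) (tail_of_order d o <= k).
Proof.
apply: (iffP (bigmax_leqP_seq _ _ _ _)) => le_o q q_d; last first.
  by rewrite leq_ceil_div ?logn_gt0 ?le_o.
by have := le_o q q_d isT; rewrite leq_ceil_div ?logn_gt0.
Qed.

Lemma tail_of_order_dvdn d o N : 0 < N -> o %| N -> tail_of_order d o <= tail_of_order d N.
Proof.
move=> N_gt0 o_N; apply/tail_of_order_leP => q q_d.
apply: leq_trans (dvdn_leq_log q N_gt0 o_N) _.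
by apply/tail_of_order_leP.
Qed.

Lemma tail_boundE p d : 0 < p ->
  tail_bound p d = maxn (tail_of_order d p.-1) (tail_of_order d p.+1).
Proof. by move=> p_gt0; rewrite /tail_bound big_split addn1 subn1. Qed.

Lemma logn_dvdn_expn_mul q d o k e : prime q -> q %| d -> 0 < d -> 0 < e -> ~~ (q %| e) ->
  o %| d ^ k * e -> logn q o <= k * logn q d.
Proof.
move=> q_pr q_d d_gt0 e_gt0 q_e o_dke.
have dke_gt0 : 0 < d ^ k * e by rewrite muln_gt0 expn_gt0 d_gt0.
apply: leq_trans (dvdn_leq_log q dke_gt0 o_dke) _.
rewrite lognM ?expn_gt0 ?d_gt0 // lognX.
suff -> : logn q e = 0 by rewrite addn0.
by apply/eqP; rewrite -leqn0 leqNgt logn_gt0 mem_primes q_pr e_gt0.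
Qed.

Lemma exists_dvdn_expn_pm1 d o k : 1 < d -> 0 < o ->
  (exists2 n, 0 < n & (o %| d ^ k * (d ^ n - 1)) || (o %| d ^ k * (d ^ n + 1))) <->
  (forall q, q \in primes d -> logn q o <= k * logn q d).
Proof.
move=> d_gt1 o_gt0; have d_gt0 : 0 < d by lia.
split=> [[n n_gt0 /orP o_dvd] q | le_o].
  rewrite mem_primes => /and3P[q_pr _ q_d].
  have q_dn : q %| d ^ n by rewrite dvdn_exp.
  have dn_gt1 : 1 < d ^ n by rewrite -(exp1n n) ltn_exp2r -?lt0n.
  have q_1 : ~~ (q %| 1) by rewrite dvdn1 neq_ltn prime_gt1 ?orbT.
  case: o_dvd => o_dvd; apply: (logn_dvdn_expn_mul q_pr q_d d_gt0 _ _ o_dvd).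
  - by rewrite subn_gt0.
  - by rewrite -(dvdn_subr (leq_subr 1 _)) // subKn ?q_1 //; lia.
  - by rewrite addn1.
  - by rewrite dvdn_addr.
(* n := totient of the part of o coprime to d: then d^n = 1 modulo that part. *)
pose u := o`_(\pi(d))^'.
have u_gt0 : 0 < u by apply: part_gt0.
exists (totient u); first by rewrite totient_gt0.
apply/orP; left; rewrite -(partnC \pi(d) o_gt0); apply: dvdn_mul.
  apply/(dvdn_partP _ (part_gt0 _ _)) => q q_o.
  have q_d : q \in \pi(d) by apply: (pnatPpi (part_pnat _ _) q_o).
  have q_pr : prime q by move: q_d; rewrite mem_primes => /andP[].
  rewrite partn_part => [|r]; last by rewrite inE => /eqP ->.
  by rewrite p_part pfactor_dvdn ?expn_gt0 ?d_gt0 // lognX le_o.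
have d_u : coprime d u by apply: pnat_coprime (pnat_pi d_gt0) (part_pnat _ _).
by rewrite -eqn_mod_dvd ?expn_gt0 ?d_gt0 //; apply/eqP/Euler_exp_totient.
Qed.

Lemma is_tail_iff (T : Type) (f : T -> T) x B :
  (forall k, periodic_pt f (iter k f x) <-> B <= k) ->
  forall m, is_tail f x m <-> m = B.
Proof.
move=> per_iff m; split=> [[/per_iff le_Bm not_per] | ->].
  apply/eqP; rewrite eqn_leq le_Bm andbT leqNgt; apply/negP => lt_mB.
  by apply: (not_per B lt_mB); apply/per_iff.
by split=> [|k lt_kB /per_iff]; [apply/per_iff | rewrite leqNgt lt_kB].
Qed.

Section ChebyshevTail.
Variables (p d : nat) (L : fieldType) (phi : {rmorphism 'F_p -> L}).
Variables (x : 'F_p) (z : L) (o : nat).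
Hypotheses (d_gt1 : 1 < d) (prim_z : (o.-primitive_root z)%R) (phi_x : phi x = (z + z^-1)%R).

Let z_nz : z != 0%R.
Proof. by rewrite (prim_root_eq0 prim_z) -lt0n (prim_order_gt0 prim_z). Qed.

Lemma iter_cheb_map_eq n k :
  (iter n (cheb_map p d) (iter k (cheb_map p d) x) == iter k (cheb_map p d) x) =
  (o %| d ^ k * (d ^ n - 1)) || (o %| d ^ k * (d ^ n + 1)).
Proof.
have le_dk : d ^ k <= d ^ (n + k) by rewrite leq_pexp2l ?leq_addl //; lia.
have sub_dk : d ^ (n + k) - d ^ k = d ^ k * (d ^ n - 1) by rewrite expnD mulnBr muln1 mulnC.
have add_dk : d ^ (n + k) + d ^ k = d ^ k * (d ^ n + 1) by rewrite expnD mulnDr muln1 mulnC.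
rewrite -iterD -(inj_eq (fmorph_inj phi)) !(rmorph_iter_cheb_map _ _ z_nz phi_x).
rewrite -sub_dk -add_dk -eqn_mod_dvd // -(eq_prim_root_expr prim_z) (prim_order_dvd prim_z) exprD.
by apply/eqP/orP; rewrite add_inv_eq ?expf_neq0 //; case=> /eqP; auto.
Qed.

Lemma periodic_iter_cheb_map k :
  periodic_pt (cheb_map p d) (iter k (cheb_map p d) x) <-> tail_of_order d o <= k.
Proof.
rewrite -(rwP (tail_of_order_leP _ _ _)).
rewrite -(exists_dvdn_expn_pm1 k d_gt1 (prim_order_gt0 prim_z)).
split=> [[n [n_gt0 per_n]] | [n n_gt0 per_n]]; exists n => //.
  by rewrite -iter_cheb_map_eq per_n.
by split=> //; apply/eqP; rewrite iter_cheb_map_eq.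
Qed.

Lemma is_tail_cheb_map m : is_tail (cheb_map p d) x m <-> m = tail_of_order d o.
Proof. exact/is_tail_iff/periodic_iter_cheb_map. Qed.

End ChebyshevTail.

Section FrobeniusFp.
Local Open Scope ring_scope.
Variables (p : nat) (L : fieldType) (phi : {rmorphism 'F_p -> L}).
Hypothesis p_pr : prime p.

Lemma Fp_fermat (a : 'F_p) : a ^+ p = a.
Proof. by rewrite -{2}(expf_card a) card_Fp. Qed.

Lemma rmorph_Fp_image_iff (y : L) : (exists a, phi a = y) <-> y ^+ p = y.
Proof.
split=> [[a <-] | y_fix]; first by rewrite -rmorphXn Fp_fermat.
have [/existsP[a /eqP <-] | /existsPn y_notin] := boolP [exists a, phi a == y].
  by exists a.
exfalso.
pose P : {poly L} := 'X^p - 'X.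
have size_P : size P = p.+1.
  by rewrite size_polyDl size_polyXn // size_polyN size_polyX ltnS prime_gt1.
have P_nz : P != 0 by rewrite -size_poly_gt0 size_P.
have roots_P : all (root P) (y :: map phi (enum 'F_p)).
  apply/allP => _ /predU1P[-> | /mapP[a _ ->]]; rewrite /root !hornerE ?y_fix ?subrr //.
  by rewrite -rmorphXn Fp_fermat subrr.
have uniq_roots : uniq (y :: map phi (enum 'F_p)).
  rewrite /= (map_inj_uniq (fmorph_inj phi)) enum_uniq andbT.
  by apply/mapP => -[a _ /esym/eqP]; apply/negP/y_notin.
have := max_poly_roots P_nz roots_P uniq_roots.
by rewrite size_P /= size_map -cardE card_Fp // ltnn.
Qed.

Lemma add_inv_in_Fp (z : L) : z != 0 ->
  (exists a, phi a = z + z^-1) <-> z ^+ p.-1 = 1 \/ z ^+ p.+1 = 1.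
Proof.
move=> z_nz; have pL : p \in [pchar L] := rmorph_pchar phi (pchar_Fp p_pr).
rewrite rmorph_Fp_image_iff exprDn_pchar ?pnatE // exprVn add_inv_eq ?expf_neq0 //.
have -> : (z ^+ p = z) <-> (z ^+ p.-1 = 1).
  rewrite -{1}(prednK (prime_gt0 p_pr)) exprSr.
  by split=> [/(canRL (mulfK z_nz)) -> | ->]; rewrite ?divff ?mul1r.
by rewrite -exprSr.
Qed.

End FrobeniusFp.

Section FiniteFieldRoots.
Local Open Scope ring_scope.

Lemma exists_add_inv (F : finFieldType) (x : F) :
  exists (L : fieldType) (phi : {rmorphism F -> L}) (z : L), z != 0 /\ phi x = z + z^-1.
Proof.
pose P : {poly F} := ('X - x%:P) * 'X + 1%:P.
have size_P : size P = 3 by rewrite size_MXaddC oner_eq0 andbF size_XsubC.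
have P_nz : P != 0 by rewrite -size_poly_gt0 size_P.
have [L [[|r rs] split_P _]] := FinSplittingFieldFor P_nz.
  by have := eqp_size split_P; rewrite big_nil size_poly1 size_map_poly size_P.
have : root (map_poly (in_alg L) P) r by rewrite (eqp_root split_P) root_prod_XsubC mem_head.
rewrite /root rmorphD rmorphM rmorphB /= map_polyX !map_polyC /= !hornerE /= scale1r => /eqP root_r.
have r_nz : r != 0.
  by apply/eqP => r0; move/eqP: root_r; rewrite r0 mulr0 add0r oner_eq0.
exists L, (in_alg L), r; split=> //=.
set a := x%:A in root_r *.
have -> : r^-1 = a - r.
  by apply: (mulIf r_nz); rewrite mulVf // -[LHS]subr0 -root_r; ring.
by rewrite addrC subrK.
Qed.

Lemma finField_prim_root (F : finFieldType) M : (M %| #|F|.-1)%N ->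
  exists w : F, M.-primitive_root w.
Proof.
move=> M_dvd; pose units := enum (predC1 (0 : F)).
have card_F_gt1 := card_finNzRing_gt1 F.
have card_gt0 : (0 < #|F|.-1)%N by rewrite -subn1 subn_gt0.
have units_unity : all (#|F|.-1).-unity_root units.
  apply/allP => w; rewrite mem_enum inE => w_nz; apply/unity_rootP.
  by apply: (mulIf w_nz); rewrite mul1r -exprSr prednK ?expf_card // ltnW.
have size_units : (#|F|.-1 <= size units)%N by rewrite -cardE cardC1.
have /hasP[w _ prim_w] := has_prim_root card_gt0 units_unity (enum_uniq _) size_units.
by exists (w ^+ (#|F|.-1 %/ M)); apply: dvdn_prim_root.
Qed.

End FiniteFieldRoots.

Section TailBound.
Variables (p d : nat).
Hypotheses (p_pr : prime p) (d_gt1 : 1 < d).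

Lemma tail_le_tail_bound x m : is_tail (cheb_map p d) x m -> m <= tail_bound p d.
Proof.
move=> tail_m; have [L [phi [z [z_nz phi_x]]]] := exists_add_inv x.
have tail_le N : 0 < N -> (z ^+ N = 1)%R -> m <= tail_of_order d N.
  move=> N_gt0 zN; have [o prim_z o_N] := prim_order_exists N_gt0 zN.
  by move/(is_tail_cheb_map d_gt1 prim_z phi_x): tail_m => ->; apply: tail_of_order_dvdn.
rewrite (tail_boundE d (prime_gt0 p_pr)).
have [zN | zN] : (z ^+ p.-1 = 1 \/ z ^+ p.+1 = 1)%R.
  by apply/(add_inv_in_Fp phi p_pr z_nz); exists x.
- apply: leq_trans (tail_le _ _ zN) (leq_maxl _ _).
  by rewrite -subn1 subn_gt0 prime_gt1.
- exact: leq_trans (tail_le _ _ zN) (leq_maxr _ _).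
Qed.

Lemma exists_tail_of_order N : (N %| p.-1) || (N %| p.+1) ->
  exists x : 'F_p, is_tail (cheb_map p d) x (tail_of_order d N).
Proof.
move=> N_dvd; have [F charF card_F] := pPrimePowerField p_pr (isT : 0 < 2).
pose L : finFieldType := pPrimeCharType charF.
have card_L : #|L|.-1 = p.-1 * p.+1.
  by rewrite card_F -subn1 -(subn1 p) -(addn1 p) -subn_sqr exp1n.
have [w prim_w] : exists w : L, (N.-primitive_root w)%R.
  by apply: finField_prim_root; rewrite card_L; case/orP: N_dvd => N_dvd;
    [apply: dvdn_mulr | apply: dvdn_mull].
have w_nz : w != 0%R by rewrite (prim_root_eq0 prim_w) -lt0n (prim_order_gt0 prim_w).
have [x phi_x] : exists x, in_alg L x = (w + w^-1)%R.
  apply/(add_inv_in_Fp _ p_pr w_nz).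
  by case/orP: N_dvd; rewrite (prim_order_dvd prim_w) => /eqP; auto.
by exists x; apply/(is_tail_cheb_map d_gt1 prim_w phi_x).
Qed.

End TailBound.

Theorem mainTheorem6 (p d : nat) (hp : prime p) (hd : 1 < d) :
  (exists x : 'F_p, is_tail (cheb_map p d) x (tail_bound p d)) /\
  (forall (x : 'F_p) (m : nat), is_tail (cheb_map p d) x m -> m <= tail_bound p d).
Proof.
split; last exact: tail_le_tail_bound.
rewrite (tail_boundE d (prime_gt0 hp)).
by case: leqP => _; apply: (exists_tail_of_order hp hd); rewrite dvdnn ?orbT.
Qed.
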